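(* Let $\mu>0$, $k>0$, $y(x)=-kx^2$, and let $x_p$, $m(x)$ and $N(x,\xi)$ be as in the context. Then $\partial_\xi N(x,\xi)<0$ for every $x\in(0,x_p)$ and every $\xi\in(0,1)$.
   Context: Let $g(u)=u^2(1-u)$ and $G(u)=u^3/3-u^4/4$ for $u\in[0,1]$. If $k^2\le\mu/6$ set $x_p=1$; otherwise let $x_p\in(0,1)$ be the unique $x\in(0,1)$ with $y(x)^2=2\mu G(x)$. For $x\in(0,x_p)$, $m(x)\in(0,x)$ is the unique number with $2\mu G(m(x))=2\mu G(x)-y(x)^2$; $m$ is $\mathcal{C}^1$. Define, for $x\in(0,x_p)$ and $\xi\in[0,1]$, writing $z=x-(x-m(x))\xi$, $$N(x,\xi)=(1-m'(x))\bigl(y(x)^2+2\mu(G(z)-G(x))\bigr)-(x-m(x))\Bigl(y(x)y'(x)+\mu\bigl(g(z)\,(1-(1-m'(x))\xi)-g(x)\bigr)\Bigr).$$ *)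

From Stdlib Require Import Reals.
From Coquelicot Require Import Coquelicot.
Open Scope R_scope.

Definition g (u : R) : R := u ^ 2 * (1 - u).
Definition G (u : R) : R := u ^ 3 / 3 - u ^ 4 / 4.

Definition yk (k : R) (x : R) : R := - k * x ^ 2.

Definition is_xp (mu : R) (y : R -> R) (k xp : R) : Prop :=
  (k ^ 2 <= mu / 6 -> xp = 1) /\
  (mu / 6 < k ^ 2 -> 0 < xp < 1 /\ (y xp) ^ 2 = 2 * mu * G xp).

Definition is_m (mu : R) (y : R -> R) (xp : R) (m : R -> R) : Prop :=
  forall x, 0 < x < xp ->
    (0 < m x < x /\ 2 * mu * G (m x) = 2 * mu * G x - (y x) ^ 2) /\
    ex_derive m x /\ continuous (Derive m) x.

Definition Nxi (mu : R) (y m : R -> R) (x xi : R) : R :=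
  let z := x - (x - m x) * xi in
  let m' := Derive m x in
  let y' := Derive y x in
  (1 - m') * ((y x) ^ 2 + 2 * mu * (G z - G x))
  - (x - m x) * ((y x) * y' + mu * (g z * (1 - (1 - m') * xi) - g x)).

(* Differentiating N in xi gives mu (x - m) h, where h is affine in m'.  The
   defining relation 2 mu G(m) = 2 mu G(x) - y^2 with y = -k x^2, differentiated
   in x and then used once more to eliminate k, expresses m' through m and x:
   3 x g(m) (1 - m') = (x - m) (x^2 + x m + 4 m^2 - 3 m^3).
   Substituting, 3 x g(m) h becomes -(x - m) z P(m, z, x) for a quintic P, which
   is positive on 0 < m < z < x < 1. *)
From Stdlib Require Import Reals Lra Psatz.
From Coquelicot Require Import Coquelicot.
Open Scope R_scope.

(* [w] homogenizes; only [w = 1] is used.  In the variables M, z - M, x - z,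
   w - x the homogeneous quintic [sign_form] has positive coefficients. *)
Definition chord_form (w M x : R) : R :=
  w * x ^ 2 + w * x * M + 4 * w * M ^ 2 - 3 * M ^ 3.

Definition sign_form (w M z x : R) : R :=
  chord_form w M x * z * (w - z)
  - (2 * w - 3 * z) * (3 * x * M ^ 2 * (w - M) - chord_form w M x * (x - z)).

Lemma sign_form_pos (w M z x : R) :
  0 < M -> M < z -> z < x -> x < w -> 0 < sign_form w M z x.
Proof.
  intros HM Hz Hx Hw.
  set (p := z - M); set (q := x - z); set (r := w - x).
  assert (Ez : z = M + p) by (unfold p; ring).
  assert (Ex : x = M + p + q) by (unfold p, q; ring).
  assert (Ew : w = M + p + q + r) by (unfold p, q, r; ring).
  assert (Pp : 0 < p) by (unfold p; lra).
  assert (Pq : 0 < q) by (unfold q; lra).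
  assert (Pr : 0 < r) by (unfold r; lra).
  clearbody p q r; subst w x z.
  unfold sign_form, chord_form; ring_simplify.
  repeat (apply Rplus_lt_0_compat || apply Rmult_lt_0_compat || apply pow_lt); lra.
Qed.

Lemma G_chord (M x : R) :
  3 * x * (g M - g x) + 12 * (G x - G M) = (x - M) * chord_form 1 M x.
Proof. unfold g, G, chord_form; field. Qed.

Lemma is_xp_le_1 (mu : R) (y : R -> R) (k xp : R) : is_xp mu y k xp -> xp <= 1.
Proof.
  intros [Hsmall Hlarge].
  destruct (Rle_or_lt (k ^ 2) (mu / 6)) as [H | H].
  - rewrite (Hsmall H); lra.
  - destruct (Hlarge H) as [[_ Hlt] _]; lra.
Qed.

Lemma Derive_yk (k x : R) : Derive (yk k) x = - 2 * k * x.
Proof. apply is_derive_unique; unfold yk; auto_derive; [auto | ring]. Qed.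

Lemma is_derive_Nxi (mu : R) (y m : R -> R) (x xi : R) :
  let d := x - m x in
  let z := x - d * xi in
  is_derive (fun t : R => Nxi mu y m x t) xi
    (mu * d * (d * (z * (2 - 3 * z)) * (1 - (1 - Derive m x) * xi)
               - (1 - Derive m x) * g z)).
Proof.
  intros d z; unfold Nxi, z, d, G, g.
  auto_derive; [auto | field].
Qed.

Lemma is_m_Derive (mu : R) (y m : R -> R) (xp x : R) :
  is_m mu y xp m -> 0 < x < xp -> ex_derive y x ->
  mu * g (m x) * Derive m x = mu * g x - y x * Derive y x.
Proof.
  intros Hm Hx Hy.
  destruct (Hm x Hx) as [_ [Hmx _]].
  assert (Hnear : locally x (fun t => 0 < t < xp))
    by exact (open_and _ _ (open_gt 0) (open_lt xp) x Hx).
  assert (Dchain : is_derive (fun t => 2 * mu * G (m t)) x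
                     (2 * mu * g (m x) * Derive m x)).
  { unfold G, g; auto_derive; [auto|]. change (fun t : R => m t) with m; field. }
  assert (Drel : is_derive (fun t => 2 * mu * G (m t)) x
                   (2 * mu * g x - 2 * y x * Derive y x)).
  { apply (is_derive_ext_loc (fun t => 2 * mu * G t - y t ^ 2)).
    - apply (filter_imp (fun t => 0 < t < xp)); [|exact Hnear].
      intros t Ht; destruct (Hm t Ht) as [[_ E] _]; symmetry; exact E.
    - unfold G, g; auto_derive; [auto|]. change (fun t : R => y t) with y; field. }
  pose proof (is_derive_unique _ _ _ Dchain) as E1.
  rewrite (is_derive_unique _ _ _ Drel) in E1.
  lra.
Qed.

Lemma yk_slope (mu k xp : R) (m : R -> R) (x : R) :
  0 < mu -> is_m mu (yk k) xp m -> 0 < x < xp ->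
  3 * x * g (m x) * (1 - Derive m x) = (x - m x) * chord_form 1 (m x) x.
Proof.
  intros Hmu Hm Hx.
  assert (Hy : ex_derive (yk k) x) by (unfold yk; auto_derive; auto).
  pose proof (is_m_Derive mu (yk k) m xp x Hm Hx Hy) as Hm'.
  rewrite Derive_yk in Hm'.
  destruct (Hm x Hx) as [[_ Hrel] _].
  rewrite <- G_chord.
  apply (Rmult_eq_reg_l mu); [| lra].
  transitivity (3 * x * (mu * g (m x) - mu * g (m x) * Derive m x)); [ring|].
  rewrite Hm'.
  transitivity (3 * x * mu * (g (m x) - g x) + 6 * yk k x ^ 2); [unfold yk; ring|].
  lra.
Qed.

Lemma slope_factor_neg (M x c xi : R) :
  0 < M < x -> x < 1 -> 0 < xi < 1 ->
  3 * x * g M * c = (x - M) * chord_form 1 M x ->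
  let z := x - (x - M) * xi in
  (x - M) * (z * (2 - 3 * z)) * (1 - c * xi) - c * g z < 0.
Proof.
  intros HM Hx1 Hxi Hc z.
  assert (Hz : M < z < x) by (unfold z; split; nra).
  assert (HgM : 0 < 3 * x * g M).
  { apply Rmult_lt_0_compat; [lra|].
    unfold g; apply Rmult_lt_0_compat; [apply pow_lt|]; lra. }
  assert (Hkey : 3 * x * g M * ((x - M) * (z * (2 - 3 * z)) * (1 - c * xi) - c * g z)
                 = - ((x - M) * z * sign_form 1 M z x)).
  { transitivity (3 * x * g M * (x - M) * (z * (2 - 3 * z))
                  - 3 * x * g M * c * ((x - M) * (z * (2 - 3 * z)) * xi + g z)); [ring|].
    rewrite Hc; unfold z, g, sign_form, chord_form; ring. }
  pose proof (sign_form_pos 1 M z x ltac:(lra) ltac:(lra) ltac:(lra) ltac:(lra)).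
  apply (Rmult_lt_reg_l (3 * x * g M)); [exact HgM|].
  rewrite Hkey, Rmult_0_r.
  assert (0 < (x - M) * z) by nra.
  nra.
Qed.

Theorem lemmaA1 (mu k xp : R) (m : R -> R) :
  0 < mu -> 0 < k ->
  is_xp mu (yk k) k xp ->
  is_m mu (yk k) xp m ->
  forall x xi, 0 < x < xp -> 0 < xi < 1 ->
    Derive (fun t => Nxi mu (yk k) m x t) xi < 0.
Proof.
  intros Hmu _ Hxp Hm x xi Hx Hxi.
  pose proof (is_xp_le_1 _ _ _ _ Hxp) as Hxp1.
  destruct (Hm x Hx) as [[HM _] _].
  rewrite (is_derive_unique _ _ _ (is_derive_Nxi mu (yk k) m x xi)).
  pose proof (slope_factor_neg (m x) x (1 - Derive m x) xi
                ltac:(lra) ltac:(lra) Hxi (yk_slope mu k xp m x Hmu Hm Hx)) as Hh.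
  assert (0 < mu * (x - m x)) by (apply Rmult_lt_0_compat; lra).
  cbv zeta in *; nra.
Qed.
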